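(* Let $m\geq 4$ be an integer and let $G$ be an $m$-fragile graph. Then: (1) for all non-adjacent $x,y\in V(G)$, $G$ admits an $m$-colouring $c$ with $c(x)=c(y)$; (2) for all distinct $x,y\in V(G)$, $G$ admits an $m$-colouring $c$ with $c(x)\neq c(y)$; (3) for all distinct $x,y,z\in V(G)$, $G$ admits an $m$-colouring $c$ with $c(x)\notin\{c(y),c(z)\}$; (4) for all distinct $x,y,z\in V(G)$ that are not all pairwise adjacent, $G$ admits an $m$-colouring $c$ with $|\{c(x),c(y),c(z)\}|=2$.
   Context: All graphs are finite and simple. A graph is $k$-connected if it has at least $k+1$ vertices and no vertex cutset with at most $k-1$ vertices. For an integer $m\geq 4$, a graph $G$ is $m$-fragile if every $3$-connected subgraph of $G$ is $(m-1)$-colourable. A $k$-colouring of $G$ is a function $c:V(G)\to\{1,\dots,k\}$ with $c(x)\neq c(y)$ for every edge $xy$. *)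

(* A finite simple graph is a symmetric irreflexive
   relation [e] on a finType [T]. *)
From mathcomp Require Import all_boot all_order.
From mathcomp Require Import fingraph.
Set Implicit Arguments. Unset Strict Implicit. Unset Printing Implicit Defensive.

Section Graphs.
Variable T : finType.

Definition is_subgraph (e : rel T) (S : {set T}) (E : rel T) : Prop :=
  symmetric E /\ forall x y, E x y -> [&& x \in S, y \in S & e x y].

Definition connected_on (S : {set T}) (E : rel T) : Prop :=
  forall u v, u \in S -> v \in S ->
    connect (fun a b => [&& a \in S, b \in S & E a b]) u v.

Definition k_connected (k : nat) (S : {set T}) (E : rel T) : Prop :=
  k < #|S| /\
  forall X : {set T}, X \subset S -> #|X| < k -> connected_on (S :\: X) E.

Definition is_colouring (k : nat) (S : {set T}) (E : rel T) (c : T -> 'I_k) : Prop :=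
  forall x y, x \in S -> y \in S -> E x y -> c x != c y.

Definition colourable (k : nat) (S : {set T}) (E : rel T) : Prop :=
  exists c : T -> 'I_k, is_colouring S E c.

Definition fragile (m : nat) (e : rel T) : Prop :=
  forall (S : {set T}) (E : rel T),
    is_subgraph e S E -> k_connected 3 S E -> colourable m.-1 S E.

End Graphs.

From mathcomp Require Import all_boot all_order.
From mathcomp Require Import fingraph fingroup perm zify.
Set Implicit Arguments. Unset Strict Implicit. Unset Printing Implicit Defensive.

(* Call a vertex set S flexible when the induced graph G[S] satisfies
   (1)-(4); we show by induction on |S| that every S is flexible.  If G[S] is
   3-connected it is (m-1)-colourable by fragility, and so is G[S] when
   |S| <= 3; recolouring one or two vertices with the unused m-th colour then
   gives (1)-(4).  Otherwise S has a separation (V1, V2) with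
   V1 ∩ V2 = {u, v}.  Colourings of G[V1] and G[V2] that agree on whether u
   and v share a colour can be glued after permuting the colours of one side,
   and the colour of one vertex on the V2 side can then be prescribed, as long
   as this is consistent with its relation to u and v.  Properties (1)-(4) of
   G[V1] and G[V2] supply enough such colourings; the only configuration that
   needs a fifth colour is a K4 on two vertices of V1 \ V2 together with u and
   v, and fragility excludes it when m = 4. *)

Lemma exists_notin (T : finType) (s : seq T) : size s < #|T| -> exists t, t \notin s.
Proof.
move=> hs; case: (pickP (predC (mem s))) => [t ht|hnone]; first by exists t.
suff: #|T| <= size s by rewrite leqNgt hs.
apply: leq_trans (card_size s); apply: subset_leq_card; apply/subsetP => t _.
by have := hnone t; rewrite /= => /negbFE.
Qed.

Lemma perm_extending (T : finType) (st : seq (T * T)) :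
  {in st &, forall p q, (p.1 == q.1) = (p.2 == q.2)} ->
  exists s : {perm T}, forall p, p \in st -> s p.1 = p.2.
Proof.
elim: st => [|p st IH] hst; first by exists 1%g.
have [s hs] : exists s : {perm T}, forall q, q \in st -> s q.1 = q.2.
  by apply: IH => q r hq hr; apply: hst; rewrite inE ?hq ?hr orbT.
have hp q : q \in st -> (q.1 == p.1) = (q.2 == p.2).
  by move=> hq; apply: hst; rewrite !inE ?eqxx ?hq ?orbT.
case: (boolP (has (fun q => q.1 == p.1) st)) => [/hasP [q hq /eqP q1]|hn].
  exists s => r; rewrite inE => /orP [/eqP ->|]; last exact: hs.
  by have := hp q hq; rewrite q1 eqxx => /esym /eqP <-; rewrite -q1 hs.
exists (s * tperm (s p.1) p.2)%g => r; rewrite inE permM => /orP [/eqP ->|hr].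
  by rewrite tpermL.
have r1 : r.1 != p.1 by apply: contra hn => /eqP r1; apply/hasP; exists r; rewrite ?r1.
have r2 : r.2 != p.2 by rewrite -(hp r hr).
by rewrite hs // tpermD // -(hs r hr) ?(inj_eq perm_inj) eq_sym // (hs r hr).
Qed.

(* Decide a goal that is a boolean combination of (dis)equalities between
   colours, from the colour facts in the context, by [lia] on their values. *)
Ltac is_colour x :=
  let X := type of x in let X' := eval hnf in X in
  lazymatch X' with ordinal _ => idtac end.
Ltac colour_lia :=
  try (match goal with |- ?x = ?y => is_colour x; apply/eqP end);
  repeat match goal with
  | H : is_true (?x == ?y) |- _ => is_colour x; revert H
  | H : is_true (?x != ?y) |- _ => is_colour x; revert H
  | H : (?x == ?y) = _ |- _ => is_colour x; revert H
  | H : is_true (_ || _) |- _ => revert H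
  | H : is_true (_ && _) |- _ => revert H
  | H : ?x = ?y |- _ => is_colour x; move/eqP: H
  end;
  rewrite -?val_eqE /=; repeat match goal with H : _ |- _ => clear H end; lia.

Section Flexibility.
Variables (T : finType) (e : rel T) (m : nat).
Hypotheses (e_sym : symmetric e) (e_irr : irreflexive e) (hm : 4 <= m).

Definition realisable (S : {set T}) (P : (T -> 'I_m) -> Prop) :=
  exists c : T -> 'I_m, is_colouring S e c /\ P c.

Definition exactly_two (a b d : 'I_m) :=
  [|| (a == b) && (a != d), (a == d) && (a != b) | (b == d) && (a != b)].

Definition flexible (S : {set T}) := [/\
  forall x y, x \in S -> y \in S -> ~~ e x y ->
    realisable S (fun c => c x = c y),
  forall x y, x \in S -> y \in S -> x != y ->
    realisable S (fun c => c x != c y),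
  forall x y z, x \in S -> y \in S -> z \in S -> [&& x != y, y != z & x != z] ->
    realisable S (fun c => (c x != c y) && (c x != c z)) &
  forall x y z, x \in S -> y \in S -> z \in S -> [&& x != y, y != z & x != z] ->
    ~~ [&& e x y, e y z & e x z] ->
    realisable S (fun c => exactly_two (c x) (c y) (c z))].

Definition induced (S : {set T}) : rel T := fun x y => [&& x \in S, y \in S & e x y].

Lemma induced_subgraph S : is_subgraph e S (induced S).
Proof.
split; last by move=> x y /and3P [-> -> ->].
by move=> x y; rewrite /induced andbCA e_sym.
Qed.

Lemma realisable_impl S (P Q : (T -> 'I_m) -> Prop) :
  realisable S P -> (forall c, P c -> Q c) -> realisable S Q.
Proof. by move=> [c [hc hp]] hPQ; exists c; split => //; apply: hPQ. Qed.

Lemma nadj_of_same_colour S (c : T -> 'I_m) x y :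
  is_colouring S e c -> x \in S -> y \in S -> c x = c y -> ~~ e x y.
Proof. by move=> hc hx hy exy; apply/negP => /(hc x y hx hy); rewrite exy eqxx. Qed.

Lemma fresh_colour (x y z : 'I_m) : exists t : 'I_m, [&& t != x, t != y & t != z].
Proof.
have [|t] := @exists_notin _ [:: x; y; z]; first by rewrite card_ord.
by rewrite !inE !negb_or; exists t.
Qed.

Lemma fresh_colour4 (x y z w : 'I_m) : 4 < m ->
  exists t : 'I_m, [&& t != x, t != y, t != z & t != w].
Proof.
move=> hm5; have [|t] := @exists_notin _ [:: x; y; z; w]; first by rewrite card_ord.
by rewrite !inE !negb_or; exists t.
Qed.

Lemma pred_m_lt : m.-1 < m. Proof. by rewrite ltn_predL; apply: leq_trans hm. Qed.

Section SpareColour.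
Variables (S : {set T}) (c0 : T -> 'I_m.-1).
Hypothesis c0_col : is_colouring S e c0.

Definition spare : 'I_m := Ordinal pred_m_lt.

Definition recolour (Y : pred T) (w : T) : 'I_m :=
  if Y w then spare else widen_ord (leq_pred m) (c0 w).

Lemma recolour_in (Y : pred T) w : Y w -> recolour Y w = spare.
Proof. by rewrite /recolour => ->. Qed.

Lemma recolour_out (Y : pred T) w : ~~ Y w -> recolour Y w != spare.
Proof. by rewrite /recolour => /negbTE ->; rewrite -val_eqE /= neq_ltn ltn_ord. Qed.

Lemma recolour_colouring (Y : pred T) :
  {in S &, forall x y, Y x -> Y y -> ~~ e x y} -> is_colouring S e (recolour Y).
Proof.
move=> hY x y xS yS exy.
case: (boolP (Y x)) => yx; case: (boolP (Y y)) => yy.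
- by have := hY x y xS yS yx yy; rewrite exy.
- by rewrite (recolour_in yx) eq_sym recolour_out.
- by rewrite (recolour_in yy) recolour_out.
- by rewrite /recolour (negbTE yx) (negbTE yy) -val_eqE /= val_eqE (c0_col xS yS exy).
Qed.

Lemma flexible_of_colouring : flexible S.
Proof.
have singleton_col x : is_colouring S e (recolour (pred1 x)).
  by apply: recolour_colouring => p q _ _ /eqP -> /eqP ->; rewrite e_irr.
have pair_col x y : ~~ e x y -> is_colouring S e (recolour (pred2 x y)).
  move=> nxy; apply: recolour_colouring => p q _ _ /pred2P [] -> /pred2P [] ->;
    by rewrite ?e_irr // e_sym.
have isolate x y : x != y -> recolour (pred1 x) x != recolour (pred1 x) y.
  by move=> xy; rewrite recolour_in //= eq_sym recolour_out //= eq_sym.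
split.
- move=> x y _ _ nxy; exists (recolour (pred2 x y)); split; first exact: pair_col.
  by rewrite !recolour_in //= eqxx ?orbT.
- by move=> x y _ _ xy; exists (recolour (pred1 x)); split; [exact: singleton_col|exact: isolate].
- move=> x y z _ _ _ /and3P [xy _ xz]; exists (recolour (pred1 x)); split => //.
  by rewrite !isolate.
- have pick p q r (P : (T -> 'I_m) -> Prop) : ~~ e p q -> r != p -> r != q ->
      (forall c : T -> 'I_m, [&& c p == c q, c p == spare & c r != spare] -> P c) ->
      realisable S P.
    move=> npq rp rq hP; exists (recolour (pred2 p q)); split; first exact: pair_col.
    have ip : pred2 p q p by rewrite /= eqxx.
    have iq : pred2 p q q by rewrite /= eqxx orbT.
    have nr : ~~ pred2 p q r by rewrite /= negb_or rp rq.
    by apply: hP; rewrite (recolour_in ip) (recolour_in iq) eqxx recolour_out.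
  move=> x y z _ _ _ /and3P [xy yz xz] nt; rewrite /exactly_two.
  have [yx zx zy] : [/\ y != x, z != x & z != y] by rewrite ![_ == x]eq_sym [z == y]eq_sym.
  case: (boolP (e x y)) => exy; last by apply: (pick x y z) => // c; colour_lia.
  case: (boolP (e y z)) => eyz; last by apply: (pick y z x) => // c; colour_lia.
  have nxz : ~~ e x z by move: nt; rewrite exy eyz.
  by apply: (pick x z y) => // c; colour_lia.
Qed.

End SpareColour.

Definition no_edges_across (V1 V2 : {set T}) :=
  forall x y, x \in V1 -> x \notin V2 -> y \in V2 -> y \notin V1 -> ~~ e x y.

Definition separation (S V1 V2 : {set T}) :=
  [/\ V1 :|: V2 = S, no_edges_across V1 V2, V1 :\: V2 != set0 & V2 :\: V1 != set0].

Definition two_separation (V1 V2 : {set T}) (u v : T) :=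
  [/\ u != v, V1 :&: V2 = [set u; v] & no_edges_across V1 V2].

Lemma no_edges_across_sym V1 V2 : no_edges_across V1 V2 -> no_edges_across V2 V1.
Proof. by move=> hne x y x2 x1 y1 y2; rewrite e_sym; apply: hne. Qed.

Lemma separation_sym S V1 V2 : separation S V1 V2 -> separation S V2 V1.
Proof. by case=> hU hne h1 h2; split; rewrite // 1?setUC //; apply: no_edges_across_sym. Qed.

Lemma separation_proper S V1 V2 : separation S V1 V2 -> V1 \proper S /\ V2 \proper S.
Proof.
case=> <- _ /set0Pn [x] /setDP [x1 x2] /set0Pn [y] /setDP [y2 y1].
by split; apply/properP; split; rewrite ?subsetUl ?subsetUr //;
  [exists y | exists x]; rewrite // inE ?x1 ?y2 ?orbT.
Qed.

Lemma separation_grow S V1 V2 : separation S V1 V2 -> 1 < #|V1 :\: V2| ->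
  exists V1' V2', separation S V1' V2' /\ #|V1' :&: V2'| = #|V1 :&: V2|.+1.
Proof.
case=> hU hne _ h2 /card_gt1P [w [x [/setDP [w1 w2] /setDP [x1 x2] wx]]].
exists V1, (w |: V2); split; last first.
  rewrite setIUr (setIidPr _) ?sub1set // cardsU1 inE.
  by rewrite (negbTE w2) andbF.
split.
- by rewrite -hU setUCA (setUidPr _) // sub1set inE w1.
- move=> p q p1; rewrite !inE negb_or => /andP [pw p2] /orP [/eqP ->|q2 q1].
    by rewrite w1.
  exact: hne.
- by apply/set0Pn; exists x; rewrite !inE negb_or eq_sym wx x1 x2.
- case/set0Pn: h2 => y /setDP [y2 y1].
  by apply/set0Pn; exists y; rewrite !inE y2 orbT andbT.
Qed.

Lemma separation_grow_small S V1 V2 :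
  separation S V1 V2 -> #|V1 :&: V2| < 2 -> 3 < #|S| ->
  exists V1' V2', separation S V1' V2' /\ #|V1' :&: V2'| = #|V1 :&: V2|.+1.
Proof.
move=> hsep hX hS.
case: (ltnP 1 #|V1 :\: V2|) => h1; first exact: separation_grow.
case: (ltnP 1 #|V2 :\: V1|) => h2.
  have [V1' [V2' [hsep' hc]]] := separation_grow (separation_sym hsep) h2.
  by exists V1', V2'; rewrite hc setIC.
exfalso; have hU : S = (V1 :\: V2) :|: (V2 :\: V1) :|: (V1 :&: V2).
  case: hsep => <- _ _ _; apply/setP => x; rewrite !inE.
  by case: (x \in V1); case: (x \in V2).
have := (leq_card_setU (V1 :\: V2 :|: V2 :\: V1) (V1 :&: V2)).1.
have := (leq_card_setU (V1 :\: V2) (V2 :\: V1)).1.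
rewrite -hU; lia.
Qed.

Lemma separation_of_order2 S V1 V2 :
  separation S V1 V2 -> #|V1 :&: V2| <= 2 -> 3 < #|S| ->
  exists V1' V2' u v, two_separation V1' V2' u v /\ separation S V1' V2'.
Proof.
move=> hsep hX hS.
have [V1' [V2' [hsep' /cards2P [u [v [uv huv]]]]]] :
    exists V1' V2', separation S V1' V2' /\ #|V1' :&: V2'| == 2.
  move: {2}(2 - _) (leqnn (2 - #|V1 :&: V2|)) => k.
  elim: k V1 V2 hsep hX => [|k IH] V1 V2 hsep hX hk.
    by exists V1, V2; split => //; rewrite eqn_leq hX; lia.
  case: (ltnP #|V1 :&: V2| 2) => h; last by exists V1, V2; rewrite eqn_leq hX h.
  have [V1' [V2' [hsep' hc]]] := separation_grow_small hsep h hS.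
  by apply: (IH V1' V2') => //; rewrite hc; lia.
by exists V1', V2', u, v; case: (hsep') => _ hne _ _.
Qed.

Lemma separation_of_disconnected (S X : {set T}) (p q : T) :
  X \subset S -> p \in S :\: X -> q \in S :\: X ->
  ~~ connect (fun a b => [&& a \in S :\: X, b \in S :\: X & induced S a b]) p q ->
  exists V1 V2, separation S V1 V2 /\ V1 :&: V2 \subset X.
Proof.
set R := fun a b => _; move=> XS pX qX npq.
have [C hC] : {C : {set T} | forall w, (w \in C) = connect R p w}.
  by exists [set w | connect R p w] => w; rewrite inE.
have CX : C \subset S :\: X.
  apply/subsetP => w; rewrite hC => hw.
  have cl : closed R (S :\: X) by move=> a b /and3P [ha hb _]; rewrite ha hb.
  by rewrite -(closed_connect cl hw).
have pC : p \in C by rewrite hC connect0.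
have qC : q \notin C by rewrite hC.
have C_S w : w \in C -> w \in S by move=> /(subsetP CX); rewrite inE => /andP [].
exists (S :\: C), (C :|: X); split; last first.
  by apply/subsetP => w; rewrite !inE => /andP [/andP [/negbTE -> _] /=].
split.
- apply/setP => w; rewrite !inE; case: (boolP (w \in C)) => [/C_S -> //|_] /=.
  by case: (boolP (w \in X)) => [/(subsetP XS) -> | _]; rewrite ?orbF ?orbT.
- move=> x y; rewrite !inE negb_or negb_and negbK => /andP [xC xS] /andP [_ xX] hy1 hy2.
  have yC : y \in C.
    case/orP: hy1 => [//|/(subsetP XS) yS].
    by move: hy2; rewrite yS orbF.
  apply: contra xC => exy; rewrite hC; apply: (connect_trans (y := y)).
    by rewrite -hC.
  apply: connect1.
  have := subsetP CX y yC; rewrite !inE /induced => /andP [yX yS].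
  by rewrite /R /induced !inE yX yS xX xS e_sym exy.
- by apply/set0Pn; exists q; move: qX; rewrite !inE negb_or => /andP [-> ->]; rewrite qC.
- by apply/set0Pn; exists p; rewrite !inE pC.
Qed.

Lemma three_connected_or_two_separation (S : {set T}) : 3 < #|S| ->
  k_connected 3 S (induced S) \/
  exists V1 V2 u v, [/\ two_separation V1 V2 u v, V1 :|: V2 = S, V1 \proper S & V2 \proper S].
Proof.
move=> hS.
case: (boolP [exists X : {set T}, [&& X \subset S, #|X| < 3 &
    [exists p, exists q, [&& p \in S :\: X, q \in S :\: X &
       ~~ connect (fun a b => [&& a \in S :\: X, b \in S :\: X & induced S a b]) p q]]]]).
- case/existsP => X /and3P [XS X3 /existsP [p /existsP [q /and3P [pX qX npq]]]].
  right; have [V1 [V2 [hsep hX]]] := separation_of_disconnected XS pX qX npq.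
  have hX2 : #|V1 :&: V2| <= 2 by apply: leq_trans (subset_leq_card hX) _.
  have [V1' [V2' [u [v [hsep2 hsep']]]]] := separation_of_order2 hsep hX2 hS.
  have [p1 p2] := separation_proper hsep'.
  by exists V1', V2', u, v; case: hsep' => hU _ _ _.
- move=> hnone; left; split => // X XS X3 p q hp hq.
  apply/negPn/negP => npq; case/negP: hnone; apply/existsP; exists X.
  by rewrite XS X3; apply/existsP; exists p; apply/existsP; exists q; rewrite hp hq npq.
Qed.

Section TwoSeparation.
Variables (S V1 V2 : {set T}) (u v : T).
Hypotheses (hsep : two_separation V1 V2 u v) (hS : S \subset V1 :|: V2).

Lemma sep_neq : u != v. Proof. by case: hsep. Qed.

Lemma sep_cut w : (w \in V1) && (w \in V2) = (w == u) || (w == v).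
Proof. by case: hsep => _ hX _; rewrite -in_setI hX !inE. Qed.

Lemma sep_u1 : u \in V1. Proof. by have := sep_cut u; rewrite eqxx => /andP []. Qed.
Lemma sep_u2 : u \in V2. Proof. by have := sep_cut u; rewrite eqxx => /andP []. Qed.
Lemma sep_v1 : v \in V1. Proof. by have := sep_cut v; rewrite eqxx orbT => /andP []. Qed.
Lemma sep_v2 : v \in V2. Proof. by have := sep_cut v; rewrite eqxx orbT => /andP []. Qed.

Lemma sep_cutP w : w \in V1 -> w \in V2 -> w = u \/ w = v.
Proof. by move=> w1 w2; have := sep_cut w; rewrite w1 w2 => /esym /orP [] /eqP; [left|right]. Qed.

Lemma sep_off_cut1 x : x \in V1 -> x \notin V2 -> (x != u) && (x != v).
Proof. by move=> _ x2; apply/andP; split; apply: contraNneq x2 => ->; rewrite ?sep_u2 ?sep_v2. Qed.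

Lemma sep_off_cut2 x : x \in V2 -> x \notin V1 -> (x != u) && (x != v).
Proof. by move=> _ x1; apply/andP; split; apply: contraNneq x1 => ->; rewrite ?sep_u1 ?sep_v1. Qed.

Lemma glue_colourings (c1 c2 : T -> 'I_m) (b : T) (t : 'I_m) (P : (T -> 'I_m) -> Prop) :
  is_colouring V1 e c1 -> is_colouring V2 e c2 -> b \in V2 ->
  (c1 u == c1 v) = (c2 u == c2 v) ->
  (c2 b == c2 u) = (t == c1 u) -> (c2 b == c2 v) = (t == c1 v) ->
  (forall c, c b = t -> {in V1, c =1 c1} -> P c) -> realisable S P.
Proof.
move=> h1 h2 hb huv hbu hbv hP.
(* Rename the colours of [c2] so that they agree with [c1] on the cut and
   give [b] the colour [t]. *)
have [s hs] : exists s : {perm 'I_m},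
    forall p, p \in [:: (c2 u, c1 u); (c2 v, c1 v); (c2 b, t)] -> s p.1 = p.2.
  apply: perm_extending => p q; rewrite !inE => /or3P [] /eqP -> /or3P [] /eqP -> /=;
    colour_lia.
have su : s (c2 u) = c1 u by apply: (hs (_, _)); rewrite !inE eqxx.
have sv : s (c2 v) = c1 v by apply: (hs (_, _)); rewrite !inE eqxx orbT.
have sb : s (c2 b) = t by apply: (hs (_, _)); rewrite !inE eqxx !orbT.
pose c w := if w \in V1 then c1 w else s (c2 w).
have cV1 : {in V1, c =1 c1} by move=> w hw; rewrite /c hw.
have cV2 w : w \in V2 -> c w = s (c2 w).
  move=> w2; rewrite /c; case: ifP => // w1.
  by case: (sep_cutP w1 w2) => ->.
exists c; split; last by apply: hP; rewrite ?cV2.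
move=> x y hx hy hxy; case: hsep => _ _ hne.
have := subsetP hS _ hx; have := subsetP hS _ hy; rewrite !inE.
case hx1: (x \in V1); case hy1: (y \in V1) => /= hy2 hx2.
- by rewrite !cV1 //; apply: h1.
- case hx2': (x \in V2); first by rewrite !cV2 // (inj_eq perm_inj); apply: h2.
  by have := hne _ _ hx1 (negbT hx2') hy2 (negbT hy1); rewrite hxy.
- case hy2': (y \in V2); first by rewrite !cV2 // (inj_eq perm_inj); apply: h2.
  by have := hne _ _ hy1 (negbT hy2') hx2 (negbT hx1); rewrite e_sym hxy.
- by rewrite !cV2 // (inj_eq perm_inj); apply: h2.
Qed.

Lemma extend_colouring (c1 : T -> 'I_m) : flexible V2 -> is_colouring V1 e c1 ->
  realisable S (fun c => {in V1, c =1 c1}).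
Proof.
move=> [merge2 split2 _ _] h1.
have [c2 [h2 huv]] : realisable V2 (fun c2 => (c1 u == c1 v) = (c2 u == c2 v)).
  case: (eqVneq (c1 u) (c1 v)) => E.
  - have [c2 [h2 E2]] := merge2 u v sep_u2 sep_v2 (nadj_of_same_colour h1 sep_u1 sep_v1 E).
    by exists c2; split; rewrite //= E2 eqxx.
  - have [c2 [h2 E2]] := split2 u v sep_u2 sep_v2 sep_neq.
    by exists c2; split; rewrite //= (negbTE E2).
apply: (glue_colourings (t := c1 u) h1 h2 sep_u2 huv); first by rewrite !eqxx.
  by rewrite huv.
by move=> c _.
Qed.

Definition same_fresh a (c : T -> 'I_m) : Prop := (c u == c v) && (c a != c u).
Definition same_at a (c : T -> 'I_m) : Prop := (c u == c v) && (c a == c u).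
Definition split_fresh a (c : T -> 'I_m) : Prop := [&& c u != c v, c a != c u & c a != c v].
Definition split_at_u a (c : T -> 'I_m) : Prop := (c u != c v) && (c a == c u).
Definition split_at_v a (c : T -> 'I_m) : Prop := (c u != c v) && (c a == c v).

Definition pattern_facts (V : {set T}) a : Prop :=
  [/\ realisable V (same_fresh a) \/ realisable V (split_fresh a),
      realisable V (split_fresh a) \/ realisable V (split_at_v a),
      realisable V (split_fresh a) \/ realisable V (split_at_u a),
      ~~ e u v -> realisable V (same_fresh a) \/ realisable V (same_at a) &
      ~~ [&& e a u, e u v & e a v] -> [\/ realisable V (same_fresh a),
         realisable V (split_at_u a) | realisable V (split_at_v a)]].

Lemma flexible_pattern_facts (V : {set T}) a : flexible V -> a \in V -> u \in V -> v \in V ->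
  a != u -> a != v -> pattern_facts V a.
Proof.
move=> [merge _ isolate two] ha hu hv au av; have uv := sep_neq.
rewrite /pattern_facts /realisable /same_fresh /same_at /split_fresh /split_at_u /split_at_v.
split.
- have [c [hc h]] := isolate a u v ha hu hv ltac:(by rewrite au av uv).
  by case: (eqVneq (c u) (c v)) => E; [left|right]; exists c; split => //; colour_lia.
- have [c [hc h]] := isolate u a v hu ha hv ltac:(by rewrite eq_sym au av uv).
  by case: (eqVneq (c a) (c v)) => E; [right|left]; exists c; split => //; colour_lia.
- have [c [hc h]] := isolate v a u hv ha hu ltac:(by rewrite eq_sym av au eq_sym uv).
  by case: (eqVneq (c a) (c u)) => E; [right|left]; exists c; split => //; colour_lia.
- move=> nuv; have [c [hc h]] := merge u v hu hv nuv.
  by case: (eqVneq (c a) (c u)) => E; [right|left]; exists c; split => //; colour_lia.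
- move=> nt; have [c [hc h]] := two a u v ha hu hv ltac:(by rewrite au uv av) nt.
  by move: h; rewrite /exactly_two => /or3P [] h; [apply: Or32|apply: Or33|apply: Or31];
    exists c; split => //; colour_lia.
Qed.

Lemma same_fresh_nadj (V : {set T}) a : u \in V -> v \in V ->
  realisable V (same_fresh a) -> ~~ e u v.
Proof. by move=> hu hv [c [hc /andP [/eqP huv _]]]; apply: nadj_of_same_colour hc hu hv huv. Qed.

(* [glue h1 h2 hb t] glues the colourings of [h1] and [h2], giving [b] the
   colour [t], and checks the requested pattern of colours. *)
Ltac glue h1 h2 hb t :=
  apply: (glue_colourings (t := t) h1 h2 hb); [colour_lia | colour_lia | colour_lia |
    let hV := fresh "hV" in move=> ? /= -> hV;
    rewrite ?(hV u sep_u1) ?(hV v sep_v1) ?hV //; colour_lia].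
Ltac glue_fresh h1 h2 hb x y z :=
  let t := fresh "t" in let ht := fresh "ht" in
  have [t ht] := fresh_colour x y z; glue h1 h2 hb t.

Hypotheses (flex1 : flexible V1) (flex2 : flexible V2).
Variable b : T.
Hypotheses (hb2 : b \in V2) (hb1 : b \notin V1).

Lemma patterns_b : pattern_facts V2 b.
Proof.
have /andP [bu bv] := sep_off_cut2 hb2 hb1.
exact: flexible_pattern_facts flex2 hb2 sep_u2 sep_v2 bu bv.
Qed.

Section OneVertexEachSide.
Variable a : T.
Hypotheses (ha1 : a \in V1) (ha2 : a \notin V2).

Lemma patterns_a : pattern_facts V1 a.
Proof.
have /andP [au av] := sep_off_cut1 ha1 ha2.
exact: flexible_pattern_facts flex1 ha1 sep_u1 sep_v1 au av.
Qed.

Lemma across_merge : realisable S (fun c => c a = c b).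
Proof.
have [AB1 BCv1 BCu1 _ ACC1] := patterns_a; have [AB2 BCv2 BCu2 _ ACC2] := patterns_b.
have AA : realisable V1 (same_fresh a) -> realisable V2 (same_fresh b) ->
    realisable S (fun c => c a = c b).
  by move=> [c1 [h1 /andP [p1 p2]]] [c2 [h2 /andP [q1 q2]]]; glue h1 h2 hb2 (c1 a).
have BB : realisable V1 (split_fresh a) -> realisable V2 (split_fresh b) ->
    realisable S (fun c => c a = c b).
  by move=> [c1 [h1 /and3P [p1 p2 p3]]] [c2 [h2 /and3P [q1 q2 q3]]]; glue h1 h2 hb2 (c1 a).
have CC : realisable V1 (split_at_u a) -> realisable V2 (split_at_u b) ->
    realisable S (fun c => c a = c b).
  by move=> [c1 [h1 /andP [p1 p2]]] [c2 [h2 /andP [q1 q2]]]; glue h1 h2 hb2 (c1 u).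
have DD : realisable V1 (split_at_v a) -> realisable V2 (split_at_v b) ->
    realisable S (fun c => c a = c b).
  by move=> [c1 [h1 /andP [p1 p2]]] [c2 [h2 /andP [q1 q2]]]; glue h1 h2 hb2 (c1 v).
case: AB1 => [A1|B1]; case: AB2 => [A2|B2]; try by [apply: AA|apply: BB].
- have nuv := same_fresh_nadj sep_u1 sep_v1 A1.
  case: BCv1 => [B1|Cv1]; first by apply: BB.
  case: BCu1 => [B1|Cu1]; first by apply: BB.
  case: (ACC2 ltac:(by rewrite (negbTE nuv) andbF)) => [A2|Cu2|Cv2];
    by [apply: AA|apply: CC|apply: DD].
- have nuv := same_fresh_nadj sep_u2 sep_v2 A2.
  case: BCv2 => [B2|Cv2]; first by apply: BB.
  case: BCu2 => [B2|Cu2]; first by apply: BB.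
  case: (ACC1 ltac:(by rewrite (negbTE nuv) andbF)) => [A1|Cu1|Cv1];
    by [apply: AA|apply: CC|apply: DD].
Qed.

Lemma across_split : realisable S (fun c => c a != c b).
Proof.
have [_ BCv1 _ AD1 _] := patterns_a; have [AB2 _ _ _ _] := patterns_b.
have fresh_b (c1 c2 : T -> 'I_m) : is_colouring V1 e c1 -> is_colouring V2 e c2 ->
    (c1 u == c1 v) = (c2 u == c2 v) -> c2 b != c2 u -> c2 b != c2 v ->
    realisable S (fun c => c a != c b).
  by move=> h1 h2 huv n1 n2; glue_fresh h1 h2 hb2 (c1 u) (c1 v) (c1 a).
case: AB2 => [A2|[c2 [h2 /and3P [q1 q2 q3]]]].
- have nuv := same_fresh_nadj sep_u2 sep_v2 A2; case: A2 => [c2 [h2 /andP [q1 q2]]].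
  by case: (AD1 nuv) => [[c1 [h1 /andP [p1 p2]]]|[c1 [h1 /andP [p1 p2]]]];
    apply: (fresh_b c1 c2) => //; colour_lia.
- by case: BCv1 => [[c1 [h1 /and3P [p1 p2 p3]]]|[c1 [h1 /andP [p1 p2]]]];
    apply: (fresh_b c1 c2) => //; colour_lia.
Qed.

Lemma across_isolate : realisable S (fun c => (c a != c b) && (c a != c u)).
Proof.
have [_ BCv1 BCu1 _ _] := patterns_a; have [_ BCv2 BCu2 _ _] := patterns_b.
case: BCv1 => [[c1 [h1 /and3P [p1 p2 p3]]]|[c1 [h1 /andP [p1 p2]]]].
- case: BCv2 => [[c2 [h2 /and3P [q1 q2 q3]]]|[c2 [h2 /andP [q1 q2]]]].
  + by glue_fresh h1 h2 hb2 (c1 u) (c1 v) (c1 a).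
  + by glue h1 h2 hb2 (c1 v).
- case: BCu2 => [[c2 [h2 /and3P [q1 q2 q3]]]|[c2 [h2 /andP [q1 q2]]]].
  + by glue_fresh h1 h2 hb2 (c1 u) (c1 v) (c1 a).
  + by glue h1 h2 hb2 (c1 u).
Qed.

Lemma across_isolate_cut : realisable S (fun c => (c u != c a) && (c u != c b)).
Proof.
have [_ BCv1 _ _ _] := patterns_a; have [_ BCv2 _ _ _] := patterns_b.
case: BCv1 => [[c1 [h1 /and3P [p1 p2 p3]]]|[c1 [h1 /andP [p1 p2]]]];
  case: BCv2 => [[c2 [h2 /and3P [q1 q2 q3]]]|[c2 [h2 /andP [q1 q2]]]].
all: try by glue_fresh h1 h2 hb2 (c1 u) (c1 v) (c1 a).
all: by glue h1 h2 hb2 (c1 v).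
Qed.

Lemma across_two : realisable S (fun c => exactly_two (c a) (c b) (c u)).
Proof.
rewrite /exactly_two.
have [AB1 _ _ AD1 _] := patterns_a; have [AB2 _ _ AD2 _] := patterns_b.
have AA : realisable V1 (same_fresh a) -> realisable V2 (same_fresh b) ->
    realisable S (fun c => [|| (c a == c b) && (c a != c u),
      (c a == c u) && (c a != c b) | (c b == c u) && (c a != c b)]).
  by move=> [c1 [h1 /andP [p1 p2]]] [c2 [h2 /andP [q1 q2]]]; glue h1 h2 hb2 (c1 a).
case: AB1 => [A1|[c1 [h1 /and3P [p1 p2 p3]]]].
- case: AB2 => [A2|[c2 [h2 /and3P [q1 q2 q3]]]]; first by apply: AA.
  have nuv := same_fresh_nadj sep_u1 sep_v1 A1.
  case: (AD2 nuv) => [A2|[c2' [h2' /andP [q1' q2']]]]; first by apply: AA.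
  by case: A1 => [c1 [h1 /andP [p1 p2]]]; glue h1 h2' hb2 (c1 u).
- case: AB2 => [A2|[c2 [h2 /and3P [q1 q2 q3]]]]; last by glue h1 h2 hb2 (c1 a).
  have nuv := same_fresh_nadj sep_u2 sep_v2 A2.
  case: (AD1 nuv) => [A1|[c1' [h1' /andP [p1' p2']]]]; first by apply: AA.
  by case: A2 => [c2 [h2 /andP [q1 q2]]]; glue_fresh h1' h2 hb2 (c1' u) (c1' v) (c1' a).
Qed.

End OneVertexEachSide.

Section PairInV1.
Variables a1 a2 : T.
Hypotheses (ha1 : a1 \in V1) (ha1' : a1 \notin V2) (ha2 : a2 \in V1) (ha2' : a2 \notin V2)
  (h12 : a1 != a2).

Lemma pair_isolate_first : realisable S (fun c => (c a1 != c a2) && (c a1 != c b)).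
Proof.
have [_ _ BCu2 AD2 _] := patterns_b; have [_ _ isolate1 _] := flex1.
have /andP [a1u _] := sep_off_cut1 ha1 ha1'; have /andP [a2u _] := sep_off_cut1 ha2 ha2'.
have [c1 [h1 /andP [p1 p2]]] := isolate1 a1 a2 u ha1 ha2 sep_u1 ltac:(by rewrite h12 a2u a1u).
case: (eqVneq (c1 u) (c1 v)) => E.
- case: (AD2 (nadj_of_same_colour h1 sep_u1 sep_v1 E)) =>
    [[c2 [h2 /andP [q1 q2]]]|[c2 [h2 /andP [q1 q2]]]].
  + by glue_fresh h1 h2 hb2 (c1 u) (c1 v) (c1 a1).
  + by glue h1 h2 hb2 (c1 u).
- case: BCu2 => [[c2 [h2 /and3P [q1 q2 q3]]]|[c2 [h2 /andP [q1 q2]]]].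
  + by glue_fresh h1 h2 hb2 (c1 u) (c1 v) (c1 a1).
  + by glue h1 h2 hb2 (c1 u).
Qed.

Lemma pair_two : realisable S (fun c => exactly_two (c a1) (c a2) (c b)).
Proof.
have [AB2 BCv2 BCu2 AD2 ACC2] := patterns_b; have [merge1 split1 isolate1 two1] := flex1.
have /andP [a1u a1v] := sep_off_cut1 ha1 ha1'; have /andP [a2u a2v] := sep_off_cut1 ha2 ha2'.
have u1 := sep_u1; have v1 := sep_v1; have uv := sep_neq.
rewrite /exactly_two.
case: (boolP (e a1 a2)) => e12.
- have HA : realisable V2 (same_fresh b) -> realisable S (fun c =>
      [|| (c a1 == c a2) && (c a1 != c b), (c a1 == c b) && (c a1 != c a2)
        | (c a2 == c b) && (c a1 != c a2)]).
    move=> A2; have nuv := same_fresh_nadj sep_u2 sep_v2 A2.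
    case: A2 => [c2 [h2 /andP [q1 q2]]]; have [c1 [h1 E]] := merge1 u v u1 v1 nuv.
    have n2 := h1 a1 a2 ha1 ha2 e12.
    case: (eqVneq (c1 a1) (c1 u)) => E2; [by glue h1 h2 hb2 (c1 a2) | by glue h1 h2 hb2 (c1 a1)].
  case: AB2 => [|[c2 [h2 /and3P [q1 q2 q3]]]]; first exact: HA.
  case: (boolP (e u v)) => euv.
    have [c1 [h1 p]] := isolate1 a1 u v ha1 u1 v1 ltac:(by rewrite a1u uv a1v).
    have n1 := h1 u v u1 v1 euv; have n2 := h1 a1 a2 ha1 ha2 e12.
    by glue h1 h2 hb2 (c1 a1).
  case: (AD2 euv) => [|[c2' [h2' /andP [q1' q2']]]]; first exact: HA.
  case: (ACC2 ltac:(by rewrite (negbTE euv) andbF)) =>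
    [|[c3 [h3 /andP [r1 r2]]]|[c3 [h3 /andP [r1 r2]]]]; first exact: HA.
  + case: (boolP (e a2 u && e a1 u)) => [/andP [tr1 tr2]|tr].
      have [c1 [h1 p]] := split1 u v u1 v1 uv.
      have n2 := h1 a1 a2 ha1 ha2 e12; have n3 := h1 a2 u ha2 u1 tr1.
      have n4 := h1 a1 u ha1 u1 tr2.
      by case: (eqVneq (c1 a1) (c1 v)) => E; [glue h1 h2 hb2 (c1 a2) | glue h1 h2 hb2 (c1 a1)].
    have [c1 [h1 p]] := two1 a1 a2 u ha1 ha2 u1 ltac:(by rewrite h12 a2u a1u)
      ltac:(by rewrite negb_and tr orbT).
    rewrite /exactly_two in p; have n2 := h1 a1 a2 ha1 ha2 e12.
    by case: (eqVneq (c1 u) (c1 v)) => E; [glue h1 h2' hb2 (c1 u) | glue h1 h3 hb2 (c1 u)].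
  + case: (boolP (e a2 v && e a1 v)) => [/andP [tr1 tr2]|tr].
      have [c1 [h1 p]] := split1 u v u1 v1 uv.
      have n2 := h1 a1 a2 ha1 ha2 e12; have n3 := h1 a2 v ha2 v1 tr1.
      have n4 := h1 a1 v ha1 v1 tr2.
      by case: (eqVneq (c1 a1) (c1 u)) => E; [glue h1 h2 hb2 (c1 a2) | glue h1 h2 hb2 (c1 a1)].
    have [c1 [h1 p]] := two1 a1 a2 v ha1 ha2 v1 ltac:(by rewrite h12 a2v a1v)
      ltac:(by rewrite negb_and tr orbT).
    rewrite /exactly_two in p; have n2 := h1 a1 a2 ha1 ha2 e12.
    by case: (eqVneq (c1 u) (c1 v)) => E; [glue h1 h2' hb2 (c1 v) | glue h1 h3 hb2 (c1 v)].
- have [c1 [h1 E]] := merge1 a1 a2 ha1 ha2 e12.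
  case: (eqVneq (c1 u) (c1 v)) => E1.
  + have nuv := nadj_of_same_colour h1 u1 v1 E1.
    case: (AD2 nuv) => [[c2 [h2 /andP [q1 q2]]]|[c2 [h2 /andP [q1 q2]]]].
      by glue_fresh h1 h2 hb2 (c1 u) (c1 v) (c1 a1).
    case: (eqVneq (c1 u) (c1 a1)) => E2; last by glue h1 h2 hb2 (c1 u).
    case: (ACC2 ltac:(by rewrite (negbTE nuv) andbF)) =>
      [[c3 [h3 /andP [r1 r2]]]|[c3 [h3 /andP [r1 r2]]]|[c3 [h3 /andP [r1 r2]]]].
    * by glue_fresh h1 h3 hb2 (c1 u) (c1 v) (c1 a1).
    * have [c1' [h1' p]] := two1 a1 a2 u ha1 ha2 u1 ltac:(by rewrite h12 a2u a1u)
        ltac:(by rewrite (negbTE e12)).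
      rewrite /exactly_two in p.
      by case: (eqVneq (c1' u) (c1' v)) => E'; [glue h1' h2 hb2 (c1' u) | glue h1' h3 hb2 (c1' u)].
    * have [c1' [h1' p]] := two1 a1 a2 v ha1 ha2 v1 ltac:(by rewrite h12 a2v a1v)
        ltac:(by rewrite (negbTE e12)).
      rewrite /exactly_two in p.
      by case: (eqVneq (c1' u) (c1' v)) => E'; [glue h1' h2 hb2 (c1' u) | glue h1' h3 hb2 (c1' v)].
  + case: BCu2 => [[c2 [h2 /and3P [q1 q2 q3]]]|[c2 [h2 /andP [q1 q2]]]].
      by glue_fresh h1 h2 hb2 (c1 u) (c1 v) (c1 a1).
    case: (eqVneq (c1 u) (c1 a1)) => E2; last by glue h1 h2 hb2 (c1 u).
    case: BCv2 => [[c3 [h3 /and3P [r1 r2 r3]]]|[c3 [h3 /andP [r1 r2]]]].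
    * by glue_fresh h1 h3 hb2 (c1 u) (c1 v) (c1 a1).
    * by glue h1 h3 hb2 (c1 v).
Qed.

(* Only the case where [a1 a2 u v] is a clique needs a fifth colour. *)
Hypothesis clique_bound : [&& e a1 a2, e a1 u, e a1 v, e a2 u, e a2 v & e u v] -> 4 < m.

Lemma pair_isolate_other : realisable S (fun c => (c b != c a1) && (c b != c a2)).
Proof.
have [AB2 _ _ AD2 ACC2] := patterns_b; have [merge1 split1 isolate1 two1] := flex1.
have /andP [a1u a1v] := sep_off_cut1 ha1 ha1'; have /andP [a2u a2v] := sep_off_cut1 ha2 ha2'.
have u1 := sep_u1; have v1 := sep_v1.
have HA : realisable V2 (same_fresh b) ->
    realisable S (fun c => (c b != c a1) && (c b != c a2)).
  move=> A2; have nuv := same_fresh_nadj sep_u2 sep_v2 A2.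
  case: A2 => [c2 [h2 /andP [q1 q2]]]; have [c1 [h1 E]] := merge1 u v u1 v1 nuv.
  by glue_fresh h1 h2 hb2 (c1 u) (c1 a1) (c1 a2).
case: AB2 => [|[c2 [h2 /and3P [q1 q2 q3]]]]; first exact: HA.
case: (boolP (e u v)) => euv.
- case: (boolP (e a1 a2)) => e12; last first.
    have [c1 [h1 E]] := merge1 a1 a2 ha1 ha2 e12; have n1 := h1 u v u1 v1 euv.
    by glue_fresh h1 h2 hb2 (c1 u) (c1 v) (c1 a1).
  case: (boolP (e a2 u && e a1 u)) => t1; last first.
    have [c1 [h1 p]] := two1 a1 a2 u ha1 ha2 u1 ltac:(by rewrite h12 a2u a1u)
      ltac:(by rewrite negb_and t1 orbT).
    rewrite /exactly_two in p; have n1 := h1 u v u1 v1 euv.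
    have n2 := h1 a1 a2 ha1 ha2 e12.
    by glue_fresh h1 h2 hb2 (c1 v) (c1 a1) (c1 a2).
  case: (boolP (e a2 v && e a1 v)) => t2; last first.
    have [c1 [h1 p]] := two1 a1 a2 v ha1 ha2 v1 ltac:(by rewrite h12 a2v a1v)
      ltac:(by rewrite negb_and t2 orbT).
    rewrite /exactly_two in p; have n1 := h1 u v u1 v1 euv.
    have n2 := h1 a1 a2 ha1 ha2 e12.
    by glue_fresh h1 h2 hb2 (c1 u) (c1 a1) (c1 a2).
  have m5 : 4 < m.
    by apply: clique_bound; move: t1 t2 => /andP [-> ->] /andP [-> ->]; rewrite e12 euv.
  have [c1 [h1 _]] := split1 a1 a2 ha1 ha2 h12; have n1 := h1 u v u1 v1 euv.
  have [t ht] := fresh_colour4 (c1 u) (c1 v) (c1 a1) (c1 a2) m5.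
  by glue h1 h2 hb2 t.
- case: (AD2 euv) => [|[c2' [h2' /andP [q1' q2']]]]; first exact: HA.
  case: (ACC2 ltac:(by rewrite (negbTE euv) andbF)) =>
    [|[c3 [h3 /andP [r1 r2]]]|[c3 [h3 /andP [r1 r2]]]]; first exact: HA.
  + have [c1 [h1 p]] := isolate1 u a1 a2 u1 ha1 ha2 ltac:(by rewrite eq_sym a1u h12 eq_sym a2u).
    by case: (eqVneq (c1 u) (c1 v)) => E; [glue h1 h2' hb2 (c1 u) | glue h1 h3 hb2 (c1 u)].
  + have [c1 [h1 p]] := isolate1 v a1 a2 v1 ha1 ha2 ltac:(by rewrite eq_sym a1v h12 eq_sym a2v).
    by case: (eqVneq (c1 u) (c1 v)) => E; [glue h1 h2' hb2 (c1 u) | glue h1 h3 hb2 (c1 v)].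
Qed.

End PairInV1.

End TwoSeparation.

Lemma two_separation_swap V1 V2 u v : two_separation V1 V2 u v -> two_separation V2 V1 u v.
Proof. by case=> uv hX hne; split => //; [rewrite setIC | apply: no_edges_across_sym]. Qed.

Lemma two_separation_sym V1 V2 u v : two_separation V1 V2 u v -> two_separation V1 V2 v u.
Proof. by case=> uv hX hne; split => //; [rewrite eq_sym | rewrite hX setUC]. Qed.

Lemma exactly_two_swap (a b d : 'I_m) : exactly_two a b d -> exactly_two a d b.
Proof. by rewrite /exactly_two; colour_lia. Qed.

Lemma exactly_two_rot (a b d : 'I_m) : exactly_two a b d -> exactly_two d a b.
Proof. by rewrite /exactly_two; colour_lia. Qed.

Section Gluing.
Variables (S V1 V2 : {set T}) (u v : T).
Hypotheses (hsep : two_separation V1 V2 u v) (hS : S \subset V1 :|: V2)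
  (flex1 : flexible V1) (flex2 : flexible V2).
Hypothesis clique_bound : forall p q r s,
  [&& e p q, e p r, e p s, e q r, e q s & e r s] -> 4 < m.

Let hsep' := two_separation_swap hsep.
Let hS' : S \subset V2 :|: V1. Proof. by rewrite setUC. Qed.

Lemma other_side x : x \in S -> x \notin V1 -> x \in V2.
Proof. by move=> /(subsetP hS); rewrite inE => /orP [->|]. Qed.

Lemma straddle x y : x \in S -> y \in S ->
  ~~ ((x \in V1) && (y \in V1)) -> ~~ ((x \in V2) && (y \in V2)) ->
  [/\ x \in V1, x \notin V2, y \in V2 & y \notin V1] \/
  [/\ x \in V2, x \notin V1, y \in V1 & y \notin V2].
Proof.
move=> /other_side xS /other_side yS n1 n2.
case: (boolP (x \in V1)) => x1.
  have y1 : y \notin V1 by move: n1; rewrite x1.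
  have y2 := yS y1.
  have x2 : x \notin V2 by move: n2; rewrite y2 andbT.
  by left.
have x2 := xS x1.
have y2 : y \notin V2 by move: n2; rewrite x2.
have y1 : y \in V1 by apply: contraR y2 => /yS.
by right.
Qed.

Lemma at_cut (P : T -> Prop) w : w \in V1 -> w \in V2 ->
  (forall u' v', two_separation V1 V2 u' v' -> P u') -> P w.
Proof.
move=> w1 w2 hP; case: (sep_cutP hsep w1 w2) => ->; apply: hP; first exact: hsep.
exact: two_separation_sym hsep.
Qed.

Lemma realisable_side1 (P : (T -> 'I_m) -> Prop) : realisable V1 P ->
  (forall c c', {in V1, c =1 c'} -> P c' -> P c) -> realisable S P.
Proof.
move=> [c1 [h1 hP]] hinv; have [c [hc hV]] := extend_colouring hsep hS flex2 h1.
by exists c; split => //; apply: hinv hP.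
Qed.

Lemma realisable_side2 (P : (T -> 'I_m) -> Prop) : realisable V2 P ->
  (forall c c', {in V2, c =1 c'} -> P c' -> P c) -> realisable S P.
Proof.
move=> [c2 [h2 hP]] hinv; have [c [hc hV]] := extend_colouring hsep' hS' flex1 h2.
by exists c; split => //; apply: hinv hP.
Qed.

Lemma isolate_off_cut x y z : x \in V1 -> x \notin V2 -> y \in S -> z \in S ->
  [&& x != y, y != z & x != z] -> ~~ ((y \in V1) && (z \in V1)) ->
  realisable S (fun c => (c x != c y) && (c x != c z)).
Proof.
move=> x1 x2 yS zS /and3P [xy yz xz] hyz.
case: (boolP (y \in V1)) => y1.
  have z1 : z \notin V1 by move: hyz; rewrite y1.
  have z2 := other_side zS z1.
  case: (boolP (y \in V2)) => y2; last first.
    exact: (pair_isolate_first hsep hS flex1 flex2 z2 z1 x1 x2 y1 y2 xy).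
  apply: (at_cut (P := fun w => realisable S (fun c => (c x != c w) && (c x != c z))) y1 y2).
  move=> u' v' hsep2.
  apply: realisable_impl (across_isolate hsep2 hS flex1 flex2 z2 z1 x1 x2) _.
  by move=> c; rewrite andbC.
have y2 := other_side yS y1.
case: (boolP (z \in V1)) => z1.
  case: (boolP (z \in V2)) => z2.
    apply: (at_cut (P := fun w => realisable S (fun c => (c x != c y) && (c x != c w))) z1 z2).
    by move=> u' v' hsep2; apply: (across_isolate hsep2 hS flex1 flex2 y2 y1 x1 x2).
  apply: realisable_impl (pair_isolate_first hsep hS flex1 flex2 y2 y1 x1 x2 z1 z2 xz) _.
  by move=> c; rewrite andbC.
have z2 := other_side zS z1.
exact: (pair_isolate_other hsep' hS' flex2 flex1 x1 x2 y2 y1 z2 z1 yz (@clique_bound y z u v)).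
Qed.

Lemma two_off_cut x y z : x \in V1 -> x \notin V2 -> y \in S -> z \in S ->
  [&& x != y, y != z & x != z] -> ~~ ((y \in V1) && (z \in V1)) ->
  realisable S (fun c => exactly_two (c x) (c y) (c z)).
Proof.
move=> x1 x2 yS zS /and3P [xy yz xz] hyz.
case: (boolP (y \in V1)) => y1.
  have z1 : z \notin V1 by move: hyz; rewrite y1.
  have z2 := other_side zS z1.
  case: (boolP (y \in V2)) => y2; last exact: (pair_two hsep hS flex1 flex2 z2 z1 x1 x2 y1 y2 xy).
  apply: (at_cut (P := fun w => realisable S (fun c => exactly_two (c x) (c w) (c z))) y1 y2).
  move=> u' v' hsep2; apply: realisable_impl (across_two hsep2 hS flex1 flex2 z2 z1 x1 x2) _.
  by move=> c; apply: exactly_two_swap.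
have y2 := other_side yS y1.
case: (boolP (z \in V1)) => z1.
  case: (boolP (z \in V2)) => z2.
    apply: (at_cut (P := fun w => realisable S (fun c => exactly_two (c x) (c y) (c w))) z1 z2).
    by move=> u' v' hsep2; apply: (across_two hsep2 hS flex1 flex2 y2 y1 x1 x2).
  apply: realisable_impl (pair_two hsep hS flex1 flex2 y2 y1 x1 x2 z1 z2 xz) _.
  by move=> c; apply: exactly_two_swap.
have z2 := other_side zS z1.
apply: realisable_impl (pair_two hsep' hS' flex2 flex1 x1 x2 y2 y1 z2 z1 yz) _.
by move=> c; apply: exactly_two_rot.
Qed.

Section FirstVertexInV1.
Variable x : T.
Hypothesis x1 : x \in V1.

Lemma merge_glue y : y \in S -> ~~ e x y -> realisable S (fun c => c x = c y).
Proof.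
have [merge1 _ _ _] := flex1; have [merge2 _ _ _] := flex2.
move=> yS nxy; case: (boolP (y \in V1)) => y1.
  by apply: realisable_side1 (merge1 x y x1 y1 nxy) _ => c c' hc; rewrite !hc.
have y2 := other_side yS y1.
case: (boolP (x \in V2)) => x2.
  by apply: realisable_side2 (merge2 x y x2 y2 nxy) _ => c c' hc; rewrite !hc.
exact: (across_merge hsep hS flex1 flex2 y2 y1 x1 x2).
Qed.

Lemma split_glue y : y \in S -> x != y -> realisable S (fun c => c x != c y).
Proof.
have [_ split1 _ _] := flex1; have [_ split2 _ _] := flex2.
move=> yS xy; case: (boolP (y \in V1)) => y1.
  by apply: realisable_side1 (split1 x y x1 y1 xy) _ => c c' hc; rewrite !hc.
have y2 := other_side yS y1.
case: (boolP (x \in V2)) => x2.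
  by apply: realisable_side2 (split2 x y x2 y2 xy) _ => c c' hc; rewrite !hc.
exact: (across_split hsep hS flex1 flex2 y2 y1 x1 x2).
Qed.

Lemma isolate_glue y z : y \in S -> z \in S -> [&& x != y, y != z & x != z] ->
  realisable S (fun c => (c x != c y) && (c x != c z)).
Proof.
have [_ _ isolate1 _] := flex1; have [_ _ isolate2 _] := flex2.
move=> yS zS d.
case: (boolP ((y \in V1) && (z \in V1))) => [/andP [y1 z1]|n1].
  by apply: realisable_side1 (isolate1 x y z x1 y1 z1 d) _ => c c' hc; rewrite !hc.
case: (boolP (x \in V2)) => x2; last exact: isolate_off_cut.
case: (boolP ((y \in V2) && (z \in V2))) => [/andP [y2 z2]|n2].
  by apply: realisable_side2 (isolate2 x y z x2 y2 z2 d) _ => c c' hc; rewrite !hc.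
apply: (at_cut (P := fun w => realisable S (fun c => (c w != c y) && (c w != c z))) x1 x2).
move=> u' v' hsep2; case: (straddle yS zS n1 n2) => [[y1 y2' z2 z1]|[y2 y1 z1 z2']].
  exact: (across_isolate_cut hsep2 hS flex1 flex2 z2 z1 y1 y2').
apply: realisable_impl (across_isolate_cut hsep2 hS flex1 flex2 y2 y1 z1 z2') _.
by move=> c; rewrite andbC.
Qed.

Lemma two_glue y z : y \in S -> z \in S -> [&& x != y, y != z & x != z] ->
  ~~ [&& e x y, e y z & e x z] -> realisable S (fun c => exactly_two (c x) (c y) (c z)).
Proof.
have [_ _ _ two1] := flex1; have [_ _ _ two2] := flex2.
move=> yS zS d nt.
case: (boolP ((y \in V1) && (z \in V1))) => [/andP [y1 z1]|n1].
  by apply: realisable_side1 (two1 x y z x1 y1 z1 d nt) _ => c c' hc; rewrite !hc.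
case: (boolP (x \in V2)) => x2; last exact: two_off_cut.
case: (boolP ((y \in V2) && (z \in V2))) => [/andP [y2 z2]|n2].
  by apply: realisable_side2 (two2 x y z x2 y2 z2 d nt) _ => c c' hc; rewrite !hc.
apply: (at_cut (P := fun w => realisable S (fun c => exactly_two (c w) (c y) (c z))) x1 x2).
move=> u' v' hsep2; case: (straddle yS zS n1 n2) => [[y1 y2' z2 z1]|[y2 y1 z1 z2']].
  apply: realisable_impl (across_two hsep2 hS flex1 flex2 z2 z1 y1 y2') _.
  by move=> c; apply: exactly_two_rot.
apply: realisable_impl (across_two hsep2 hS flex1 flex2 y2 y1 z1 z2') _.
by move=> c /exactly_two_rot; apply: exactly_two_swap.
Qed.

End FirstVertexInV1.
End Gluing.

Lemma flexible_glue (S V1 V2 : {set T}) (u v : T) :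
  two_separation V1 V2 u v -> S \subset V1 :|: V2 ->
  (forall p q r s, [&& e p q, e p r, e p s, e q r, e q s & e r s] -> 4 < m) ->
  flexible V1 -> flexible V2 -> flexible S.
Proof.
move=> hsep hS hK flex1 flex2.
have hsep' := two_separation_swap hsep; have hS' : S \subset V2 :|: V1 by rewrite setUC.
have sides x : x \in S -> (x \in V1) || (x \in V2) by move=> /(subsetP hS); rewrite inE.
split.
- move=> x y xS yS nxy; case/orP: (sides x xS) => hx.
    exact: (merge_glue hsep hS flex1 flex2 hx yS nxy).
  exact: (merge_glue hsep' hS' flex2 flex1 hx yS nxy).
- move=> x y xS yS xy; case/orP: (sides x xS) => hx.
    exact: (split_glue hsep hS flex1 flex2 hx yS xy).
  exact: (split_glue hsep' hS' flex2 flex1 hx yS xy).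
- move=> x y z xS yS zS d; case/orP: (sides x xS) => hx.
    exact: (isolate_glue hsep hS flex1 flex2 hK hx yS zS d).
  exact: (isolate_glue hsep' hS' flex2 flex1 hK hx yS zS d).
- move=> x y z xS yS zS d nt; case/orP: (sides x xS) => hx.
    exact: (two_glue hsep hS flex1 flex2 hx yS zS d nt).
  exact: (two_glue hsep' hS' flex2 flex1 hx yS zS d nt).
Qed.

Lemma card_exactly_two (a b d : 'I_m) : exactly_two a b d -> #|[set a; b; d]| = 2.
Proof.
case/or3P => /andP [/eqP -> neq]; apply/eqP/cards2P.
- by exists b, d; split => //; apply/setP => z; rewrite !inE orbb.
- by exists d, b; split => //; apply/setP => z; rewrite !inE orbAC orbb.
- by exists a, d; split => //; apply/setP => z; rewrite !inE -orbA orbb.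
Qed.

Definition clique (K : {set T}) := {in K &, forall x y, x != y -> e x y}.

Lemma clique_three_connected K : clique K -> 3 < #|K| -> k_connected 3 K (induced K).
Proof.
move=> hK hK3; split => // X _ _ x y hx hy.
case: (eqVneq x y) => [->|xy]; first exact: connect0.
apply: connect1; rewrite /= hx hy /induced.
move: hx hy; rewrite !inE => /andP [_ xK] /andP [_ yK].
by rewrite xK yK hK.
Qed.

Lemma fragile_clique K : fragile m e -> clique K -> 3 < #|K| -> #|K| < m.
Proof.
move=> hfrag hK hK3.
have [c hc] := hfrag K (induced K) (induced_subgraph K) (clique_three_connected hK hK3).
have c_inj : {in K &, injective c}.
  move=> x y hx hy cxy; apply/eqP; apply: contraT => xy.
  by have := hc x y hx hy; rewrite /induced hx hy hK // cxy eqxx => /(_ isT).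
have := max_card (mem [set c x | x in K]).
by rewrite card_in_imset // card_ord => /leq_ltn_trans; apply; apply: pred_m_lt.
Qed.

Lemma fragile_K4 p q r s : fragile m e ->
  [&& e p q, e p r, e p s, e q r, e q s & e r s] -> 4 < m.
Proof.
move=> hfrag /and5P [pq pr ps qr /andP [qs rs]].
have ne x y : e x y -> x != y by apply: contraTneq => ->; rewrite e_irr.
have hK : clique [set p; q; r; s].
  move=> x y; rewrite !inE -!orbA => /or4P [] /eqP -> /or4P [] /eqP ->;
    rewrite ?eqxx // => _; rewrite // e_sym //.
have uniq4 : uniq [:: p; q; r; s].
  by rewrite /= !inE !negb_or !ne.
have hK4 : 3 < #|[set p; q; r; s]|.
  apply: leq_trans (_ : #|[:: p; q; r; s]| <= _); first by rewrite (card_uniqP uniq4).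
  by apply: subset_leq_card; apply/subsetP => z; rewrite !inE -!orbA.
by apply: leq_trans (fragile_clique hfrag hK hK4).
Qed.

Lemma small_colourable k (S : {set T}) : 0 < k -> #|S| <= k ->
  exists c : T -> 'I_k, is_colouring S e c.
Proof.
move=> k0 hS; exists (fun w => insubd (Ordinal k0) (index w (enum S))).
have idx_lt w : w \in S -> index w (enum S) < k.
  by move=> hw; apply: leq_trans hS; rewrite cardE index_mem mem_enum.
move=> x y xS yS exy; apply: contraTneq exy => /(congr1 val).
rewrite !val_insubd !idx_lt // => /(congr1 (nth x (enum S))).
rewrite nth_index ?mem_enum // nth_index ?mem_enum // => ->.
by rewrite e_irr.
Qed.

Lemma flexible_all : fragile m e -> forall S, flexible S.
Proof.
move=> hfrag S; have [n] := ubnP #|S|; elim: n S => // n IH S hn.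
case: (leqP #|S| 3) => hS3.
  have m3 : 3 <= m.-1 by rewrite -ltnS (ltn_predK hm).
  have [c0 h0] := small_colourable (leq_trans (isT : 0 < 3) m3) (leq_trans hS3 m3).
  exact: flexible_of_colouring h0.
case: (three_connected_or_two_separation hS3) => [hk|[V1 [V2 [u [v [hsep hU p1 p2]]]]]].
  have [c0 h0] := hfrag S (induced S) (induced_subgraph S) hk.
  apply: (flexible_of_colouring (c0 := c0)) => x y hx hy hxy.
  by apply: h0 => //; rewrite /induced hx hy.
apply: (flexible_glue (S := S) hsep).
- by rewrite hU.
- by move=> p q r s; apply: fragile_K4.
- by apply: IH; apply: leq_trans (proper_card p1) _; rewrite -ltnS.
- by apply: IH; apply: leq_trans (proper_card p2) _; rewrite -ltnS.
Qed.

End Flexibility.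

Theorem theorem3 (T : finType) (e : rel T) (m : nat)
  (e_sym : symmetric e) (e_irr : irreflexive e) (hm : 4 <= m)
  (hfrag : fragile m e) :
  (forall x y : T, ~~ e x y ->
     exists c : T -> 'I_m, is_colouring [set: T] e c /\ c x = c y) /\
  (forall x y : T, x != y ->
     exists c : T -> 'I_m, is_colouring [set: T] e c /\ c x != c y) /\
  (forall x y z : T, [&& x != y, y != z & x != z] ->
     exists c : T -> 'I_m, is_colouring [set: T] e c /\
       c x \notin [:: c y; c z]) /\
  (forall x y z : T, [&& x != y, y != z & x != z] ->
     ~~ [&& e x y, e y z & e x z] ->
     exists c : T -> 'I_m, is_colouring [set: T] e c /\
       #|[set c x; c y; c z]| = 2).
Proof.
have [merge split isolate two] := flexible_all e_sym e_irr hm hfrag [set: T].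
split; [|split; [|split]].
- by move=> x y; apply: merge; rewrite inE.
- by move=> x y; apply: split; rewrite inE.
- move=> x y z d; have [c [hc h]] := isolate x y z (in_setT x) (in_setT y) (in_setT z) d.
  by exists c; rewrite !inE negb_or.
- move=> x y z d nt; have [c [hc h]] := two x y z (in_setT x) (in_setT y) (in_setT z) d nt.
  by exists c; split => //; apply: card_exactly_two.
Qed.
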